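(* With respect to the lexicographical product, $I_{even}\times\omega\cong I_{odd}$, $I_{odd}\times\omega\cong I_{even}$, and $I\times\omega\cong I$. Consequently $I_{even}\times\omega^2\cong I_{even}$ and $I_{odd}\times\omega^2\cong I_{odd}$.
   Context: For linear orders $X,Y$, $X\times Y$ is the lexicographical product (each point of $X$ replaced by a copy of $Y$). Ordinal exponents have their usual ordinal meaning, with $\omega^\omega=\sup_{n<\omega}\omega^n$; $kZ$ denotes $k$ consecutive copies of the order $Z$. The $\omega^*$-sum $\cdots+M_2+M_1$ has $M_{k+1}$ entirely to the left of $M_k$. For $n\ge 0$ let $L_n=\cdots+3\omega^{n+3}+2\omega^{n+2}+\omega^{n+1}+\omega^\omega$ (the $\omega^*$-sum whose $k$-th summand from the right, $k\ge1$, is $k\,\omega^{n+k}$, followed by $\omega^\omega$), and for $n\ge1$ let $L_{-n}=\cdots+(n+3)\omega^{3}+(n+2)\omega^{2}+(n+1)\omega+\omega^\omega$ (the $\omega^*$-sum whose $k$-th summand from the right is $(n+k)\omega^k$, followed by $\omega^\omega$). For orders $M_i$ ($i\in\mathbb{Z}$), $\cdots+M_{-1}+M_0+M_1+\cdots$ denotes the $\mathbb{Z}$-indexed ordered sum. Define \[ I_{even}=\cdots+L_{-2}+L_0+L_2+\cdots,\quad I_{odd}=\cdots+L_{-1}+L_1+L_3+\cdots,\quad I=\cdots+L_{-1}+L_0+L_1+\cdots, \] the $\mathbb{Z}$-sums of the $L_i$ over even $i$, odd $i$, and all $i$ respectively, in increasing order of index. *)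

From Stdlib Require Import Arith ZArith.

Record LO := mkLO { car : Type; lt : car -> car -> Prop }.

Definition iso (A B : LO) : Prop :=
  exists (f : car A -> car B) (g : car B -> car A),
    (forall x, g (f x) = x) /\ (forall y, f (g y) = y) /\
    (forall x y, lt A x y <-> lt B (f x) (f y)).

(* Lexicographic product X x Y: each point of X replaced by a copy of Y. *)
Definition prodLO (X Y : LO) : LO :=
  mkLO (car X * car Y)
       (fun p q => lt X (fst p) (fst q) \/ (fst p = fst q /\ lt Y (snd p) (snd q))).

Definition sumLO (I : LO) (M : car I -> LO) : LO :=
  mkLO {i : car I & car (M i)}
       (fun p q => lt I (projT1 p) (projT1 q) \/
          exists (i : car I) (x y : car (M i)),
            p = existT _ i x /\ q = existT _ i y /\ lt (M i) x y).

Definition sum2 (A B : LO) : LO :=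
  mkLO (car A + car B)
       (fun p q => match p, q with
                   | inl a, inl a' => lt A a a'
                   | inl _, inr _ => True
                   | inr _, inl _ => False
                   | inr b, inr b' => lt B b b'
                   end).

Definition finLO (k : nat) : LO :=
  mkLO {i : nat | i < k} (fun a b => proj1_sig a < proj1_sig b).

Definition omega : LO := mkLO nat Nat.lt.
Definition omega_star : LO := mkLO nat (fun a b => b < a).
Definition Zlo : LO := mkLO Z Z.lt.

(* Ordinal powers of omega via finitely supported functions (Cantor normal
   form coefficients), compared at the largest index where they differ. *)
Definition cnf_lt (f g : nat -> nat) : Prop :=
  exists i, f i < g i /\ forall j, i < j -> f j = g j.

Definition omega_pow (n : nat) : LO :=
  mkLO {f : nat -> nat | forall i, n <= i -> f i = 0}
       (fun f g => cnf_lt (proj1_sig f) (proj1_sig g)).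

Definition omega_omega : LO :=
  mkLO {f : nat -> nat | exists N, forall i, N <= i -> f i = 0}
       (fun f g => cnf_lt (proj1_sig f) (proj1_sig g)).

Definition copies (k : nat) (X : LO) : LO := prodLO (finLO k) X.

(* k-th summand from the right (k >= 1) of L_i:
   i = n >= 0 : k * omega^(n+k);  i = -n < 0 : (n+k) * omega^k. *)
Definition Lsummand (i : Z) (k : nat) : LO :=
  if Z.leb 0 i then copies k (omega_pow (Z.to_nat i + k))
  else copies (Z.to_nat (- i) + k) (omega_pow k).

(* L_i = ... + M_3 + M_2 + M_1 + omega^omega; index j of omega* carries M_(j+1). *)
Definition L (i : Z) : LO :=
  sum2 (sumLO omega_star (fun j => Lsummand i (S j))) omega_omega.

Definition I_even : LO := sumLO Zlo (fun m => L (2 * m)%Z).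
Definition I_odd : LO := sumLO Zlo (fun m => L (2 * m + 1)%Z).
Definition I_all : LO := sumLO Zlo L.

From Stdlib Require Import Arith ZArith Lia Setoid Classical FunctionalExtensionality
  ProofIrrelevance Eqdep ClassicalEpsilon.

(* In the paper's notation X x omega replaces each point of X by a copy of omega, so
   (k omega^m) x omega = k omega^(m+1) and omega^omega x omega = omega^omega: multiplying L_i
   by omega raises the exponent of every summand by one.  For i >= 0 this turns L_i into
   L_(i+1) summand by summand.  For i = -n < 0 the raised summands (n+k) omega^(k+1) are the
   summands of L_(i+1) from the second one on, and its first summand n omega is absorbed by
   omega^omega, since n omega + omega^2 = (n + omega) omega = omega^2.  Hence
   L_i x omega = L_(i+1), and summing over Z (reindexing m -> m+1 where needed) gives the
   three isomorphisms; the last two follow from omega^2 = omega x omega. *)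

Lemma iso_refl A : iso A A.
Proof. exists (fun x => x), (fun x => x). split; [|split]; intros; [reflexivity..|tauto]. Qed.

Lemma iso_sym A B : iso A B -> iso B A.
Proof.
  intros [f [g [gf [fg hfg]]]]. exists g, f. split; [|split]; auto.
  intros x y. now rewrite hfg, !fg.
Qed.

Lemma iso_trans A B C : iso A B -> iso B C -> iso A C.
Proof.
  intros [f [g [gf [fg hfg]]]] [f' [g' [gf' [fg' hfg']]]].
  exists (fun x => f' (f x)), (fun z => g (g' z)). split; [|split].
  - intros x; now rewrite gf', gf.
  - intros z; now rewrite fg, fg'.
  - intros x y; now rewrite hfg, hfg'.
Qed.

Lemma iso_eq A B : A = B -> iso A B.
Proof. intros ->; apply iso_refl. Qed.

Definition trichotomous (A : LO) : Prop := forall x y : car A, x = y \/ lt A x y \/ lt A y x.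
Definition asymmetric (A : LO) : Prop := forall x y : car A, lt A x y -> ~ lt A y x.

Lemma iso_of_strict_mono A B (f : car A -> car B) (g : car B -> car A) :
  (forall x, g (f x) = x) -> (forall y, f (g y) = y) ->
  (forall x y, lt A x y -> lt B (f x) (f y)) ->
  trichotomous A -> asymmetric B -> iso A B.
Proof.
  intros gf fg mono trA asB. exists f, g. split; [|split]; auto.
  intros x y; split; [apply mono|intros H]. destruct (trA x y) as [->|[Hxy|Hyx]]; auto.
  - exfalso; exact (asB _ _ H H).
  - exfalso; exact (asB _ _ H (mono _ _ Hyx)).
Qed.

Lemma sig_eq {A} {P : A -> Prop} (x y : {a | P a}) : proj1_sig x = proj1_sig y -> x = y.
Proof. apply eq_sig_hprop; intros; apply proof_irrelevance. Qed.

Lemma cnf_lt_asym f g : cnf_lt f g -> ~ cnf_lt g f.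
Proof.
  intros [i [Hi Hi']] [j [Hj Hj']].
  destruct (lt_eq_lt_dec i j) as [[H|<-]|H].
  - rewrite (Hi' j H) in Hj. lia.
  - lia.
  - rewrite (Hj' i H) in Hi. lia.
Qed.

Lemma cnf_lt_trichotomy f g N : (forall i, N <= i -> f i = g i) ->
  f = g \/ cnf_lt f g \/ cnf_lt g f.
Proof.
  revert f g; induction N as [|N IH]; intros f g H.
  - left; apply functional_extensionality; intros i; apply H; lia.
  - destruct (lt_eq_lt_dec (f N) (g N)) as [[c|c]|c].
    + right; left. exists N; split; [exact c|]. intros j Hj; apply H; lia.
    + apply IH. intros i Hi. destruct (Nat.eq_dec i N) as [->|]; [exact c|apply H; lia].
    + right; right. exists N; split; [exact c|]. intros j Hj; symmetry; apply H; lia.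
Qed.

Definition supported_below (n : nat) (f : nat -> nat) : Prop := forall i, n <= i -> f i = 0.

Definition cnf_LO (P : (nat -> nat) -> Prop) : LO :=
  mkLO {f | P f} (fun f g => cnf_lt (proj1_sig f) (proj1_sig g)).

Lemma trichotomous_cnf_LO P :
  (forall f, P f -> exists N, supported_below N f) -> trichotomous (cnf_LO P).
Proof.
  intros HP [f Hf] [g Hg].
  destruct (HP f Hf) as [N HN], (HP g Hg) as [M HM].
  destruct (cnf_lt_trichotomy f g (N + M)) as [E|[E|E]]; auto.
  - intros i Hi; rewrite HN, HM; auto; lia.
  - left; now apply sig_eq.
Qed.

Lemma asymmetric_cnf_LO P : asymmetric (cnf_LO P).
Proof. intros x y; apply cnf_lt_asym. Qed.

Lemma trichotomous_omega_pow n : trichotomous (omega_pow n).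
Proof. apply trichotomous_cnf_LO. intros f Hf; now exists n. Qed.

Lemma trichotomous_omega_omega : trichotomous omega_omega.
Proof. now apply trichotomous_cnf_LO. Qed.

Lemma asymmetric_omega : asymmetric omega.
Proof. intros x y; simpl; lia. Qed.

Lemma trichotomous_omega : trichotomous omega.
Proof. intros x y; simpl; lia. Qed.

Lemma trichotomous_finLO k : trichotomous (finLO k).
Proof.
  intros x y; simpl.
  destruct (lt_eq_lt_dec (proj1_sig x) (proj1_sig y)) as [[H|H]|H]; auto.
  left; now apply sig_eq.
Qed.

Lemma trichotomous_prodLO A B : trichotomous A -> trichotomous B -> trichotomous (prodLO A B).
Proof.
  intros TA TB [a b] [a' b']; simpl.
  destruct (TA a a') as [<-|[H|H]]; auto.
  destruct (TB b b') as [<-|[H|H]]; auto.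
Qed.

Lemma trichotomous_sum2 A B : trichotomous A -> trichotomous B -> trichotomous (sum2 A B).
Proof.
  intros TA TB [a|b] [a'|b']; simpl; auto.
  - destruct (TA a a') as [<-|[H|H]]; auto.
  - destruct (TB b b') as [<-|[H|H]]; auto.
Qed.

Lemma prodLO_cong A A' B B' : iso A A' -> iso B B' -> iso (prodLO A B) (prodLO A' B').
Proof.
  intros [f [g [gf [fg hfg]]]] [f' [g' [gf' [fg' hfg']]]].
  exists (fun p => (f (fst p), f' (snd p))), (fun p => (g (fst p), g' (snd p))).
  split; [|split].
  - intros [a b]; simpl; now rewrite gf, gf'.
  - intros [a b]; simpl; now rewrite fg, fg'.
  - intros [a b] [a' b']; simpl. rewrite hfg, hfg'. split.
    + intros [H|[-> H]]; auto.
    + intros [H|[E H]]; auto. right; split; auto.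
      now rewrite <- (gf a), <- (gf a'), E.
Qed.

Lemma prodLO_assoc A B C : iso (prodLO (prodLO A B) C) (prodLO A (prodLO B C)).
Proof.
  exists (fun p => (fst (fst p), (snd (fst p), snd p))),
         (fun p => ((fst p, fst (snd p)), snd (snd p))).
  split; [|split].
  - intros [[a b] c]; reflexivity.
  - intros [a [b c]]; reflexivity.
  - intros [[a b] c] [[a' b'] c']; simpl. split.
    + intros [[H|[-> H]]|[E H]]; auto. injection E as -> ->; auto.
    + intros [H|[-> [H|[-> H]]]]; auto.
Qed.

Lemma prodLO_sum2_distr A B C : iso (prodLO (sum2 A B) C) (sum2 (prodLO A C) (prodLO B C)).
Proof.
  exists (fun p => match fst p with inl a => inl (a, snd p) | inr b => inr (b, snd p) end).
  exists (fun q => match q with inl p => (inl (fst p), snd p) | inr p => (inr (fst p), snd p) end).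
  split; [|split].
  - intros [[a|b] c]; reflexivity.
  - intros [[a c]|[b c]]; reflexivity.
  - intros [[a|b] c] [[a'|b'] c']; simpl; split; try tauto;
      intros [H|[E H]]; try injection E as ->; try discriminate; subst; auto.
Qed.

Lemma sum2_cong A A' B B' : iso A A' -> iso B B' -> iso (sum2 A B) (sum2 A' B').
Proof.
  intros [f [g [gf [fg hfg]]]] [f' [g' [gf' [fg' hfg']]]].
  exists (fun p => match p with inl a => inl (f a) | inr b => inr (f' b) end).
  exists (fun p => match p with inl a => inl (g a) | inr b => inr (g' b) end).
  split; [|split].
  - intros [a|b]; now rewrite ?gf, ?gf'.
  - intros [a|b]; now rewrite ?fg, ?fg'.
  - intros [a|b] [a'|b']; simpl; auto; tauto.
Qed.

Lemma sum2_assoc A B C : iso (sum2 (sum2 A B) C) (sum2 A (sum2 B C)).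
Proof.
  exists (fun p => match p with
                   | inl (inl a) => inl a | inl (inr b) => inr (inl b) | inr c => inr (inr c) end).
  exists (fun p => match p with
                   | inl a => inl (inl a) | inr (inl b) => inl (inr b) | inr (inr c) => inr c end).
  split; [|split].
  - intros [[a|b]|c]; reflexivity.
  - intros [a|[b|c]]; reflexivity.
  - intros [[a|b]|c] [[a'|b']|c']; simpl; tauto.
Qed.

Lemma sumLO_lt_same_index I M i (x y : car (M i)) :
  lt (sumLO I M) (existT _ i x) (existT _ i y) <-> lt I i i \/ lt (M i) x y.
Proof.
  simpl. split.
  - intros [H|[k [x' [y' [E1 [E2 H]]]]]]; [now left|right].
    assert (i = k) as <- by exact (f_equal (@projT1 _ _) E1).
    apply inj_pair2 in E1; apply inj_pair2 in E2; now subst.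
  - intros [H|H]; [now left|right]. now exists i, x, y.
Qed.

Lemma sumLO_lt_diff_index I M i j (x : car (M i)) (y : car (M j)) : i <> j ->
  lt (sumLO I M) (existT _ i x) (existT _ j y) <-> lt I i j.
Proof.
  intros D. simpl. split; [|now left].
  intros [H|[k [x' [y' [E1 [E2 H]]]]]]; auto.
  apply (f_equal (@projT1 _ _)) in E1; apply (f_equal (@projT1 _ _)) in E2; simpl in *.
  congruence.
Qed.

Definition iso_data (A B : LO) : Type :=
  {f : car A -> car B & {g : car B -> car A |
    (forall x, g (f x) = x) /\ (forall y, f (g y) = y) /\
    (forall x y, lt A x y <-> lt B (f x) (f y))}}.

Lemma iso_data_of_iso A B : iso A B -> iso_data A B.
Proof.
  intros H. apply constructive_indefinite_description in H as [f H].
  apply constructive_indefinite_description in H as [g H]. now exists f, g.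
Qed.

Lemma sumLO_cong I M N : (forall i, iso (M i) (N i)) -> iso (sumLO I M) (sumLO I N).
Proof.
  intros H. pose (T i := iso_data_of_iso _ _ (H i)).
  exists (fun p => existT (fun i => car (N i)) (projT1 p) (projT1 (T (projT1 p)) (projT2 p))).
  exists (fun q => existT (fun i => car (M i)) (projT1 q)
                     (proj1_sig (projT2 (T (projT1 q))) (projT2 q))).
  split; [|split].
  - intros [i x]; simpl. destruct (T i) as [f [g [gf [fg hfg]]]]; simpl; now rewrite gf.
  - intros [i x]; simpl. destruct (T i) as [f [g [gf [fg hfg]]]]; simpl; now rewrite fg.
  - intros [i x] [j y]; simpl projT1; simpl projT2.
    destruct (classic (i = j)) as [<-|E].
    + rewrite !sumLO_lt_same_index. destruct (T i) as [f [g [gf [fg hfg]]]]; simpl.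
      now rewrite hfg.
    + now rewrite !sumLO_lt_diff_index.
Qed.

Lemma prodLO_sumLO_distr I M C :
  iso (prodLO (sumLO I M) C) (sumLO I (fun i => prodLO (M i) C)).
Proof.
  exists (fun p => existT (fun i => car (prodLO (M i) C)) (projT1 (fst p)) (projT2 (fst p), snd p)).
  exists (fun q => (existT (fun i => car (M i)) (projT1 q) (fst (projT2 q)), snd (projT2 q))).
  split; [|split].
  - intros [[i x] c]; reflexivity.
  - intros [i [x c]]; reflexivity.
  - intros [[i x] c] [[j y] d].
    change (lt (prodLO (sumLO I M) C) (existT _ i x, c) (existT _ j y, d)) with
      (lt (sumLO I M) (existT _ i x) (existT _ j y) \/
       (existT (fun i => car (M i)) i x = existT _ j y /\ lt C c d)).
    simpl projT1; simpl projT2; simpl fst; simpl snd.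
    destruct (classic (i = j)) as [<-|E].
    + rewrite !sumLO_lt_same_index. simpl.
      assert (existT (fun i => car (M i)) i x = existT _ i y <-> x = y)
        as -> by (split; [apply inj_pair2|now intros ->]).
      tauto.
    + rewrite !sumLO_lt_diff_index by exact E.
      assert (existT (fun i => car (M i)) i x <> existT _ j y)
        by (intros H; exact (E (f_equal (@projT1 _ _) H))).
      tauto.
Qed.

Lemma sumLO_reindex I J (h : car I -> car J) (h' : car J -> car I) (N : car J -> LO) :
  (forall i, h' (h i) = i) -> (forall j, h (h' j) = j) ->
  (forall i i', lt I i i' <-> lt J (h i) (h i')) ->
  iso (sumLO I (fun i => N (h i))) (sumLO J N).
Proof.
  intros h'h hh' hmono.
  exists (fun p => existT (fun j => car (N j)) (h (projT1 p)) (projT2 p)).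
  exists (fun q => existT (fun i => car (N (h i))) (h' (projT1 q))
                     (eq_rect_r (fun j => car (N j)) (projT2 q) (hh' (projT1 q)))).
  split; [|split].
  - intros [i x]; simpl. generalize (hh' (h i)) (h'h i). generalize (h' (h i)).
    intros i0 e ->. now rewrite (UIP_refl _ _ e).
  - intros [j y]; simpl. generalize (hh' j). generalize (h (h' j)).
    intros j0 e. now subst j0.
  - intros [i x] [j y]; simpl projT1; simpl projT2.
    destruct (classic (i = j)) as [<-|E].
    + rewrite (sumLO_lt_same_index J N (h i)), (sumLO_lt_same_index I (fun i => N (h i)) i).
      now rewrite hmono.
    + rewrite (sumLO_lt_diff_index I (fun i => N (h i)) i j), (sumLO_lt_diff_index J N); auto.
      intros H; apply E; now rewrite <- (h'h i), <- (h'h j), H.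
Qed.

Lemma sumLO_omega_star_last M :
  iso (sumLO omega_star M) (sum2 (sumLO omega_star (fun j => M (S j))) (M 0)).
Proof.
  exists (fun p => match p with existT _ n x =>
    (match n return car (M n) -> car (sum2 (sumLO omega_star (fun j => M (S j))) (M 0)) with
     | 0 => fun x => inr x
     | S j => fun x => inl (existT (fun j => car (M (S j))) j x) end) x end).
  exists (fun q => match q with
                   | inl p => existT (fun n => car (M n)) (S (projT1 p)) (projT2 p)
                   | inr x => existT (fun n => car (M n)) 0 x end).
  split; [|split].
  - intros [[|j] x]; reflexivity.
  - intros [[j x]|x]; reflexivity.
  - intros [[|j] x] [[|j'] y]; cbv beta iota.
    + rewrite sumLO_lt_same_index. simpl. intuition lia.
    + rewrite sumLO_lt_diff_index by discriminate. simpl. lia.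
    + rewrite sumLO_lt_diff_index by discriminate. simpl. lia.
    + change (lt (sum2 _ _) (inl ?a) (inl ?b))
        with (lt (sumLO omega_star (fun j => M (S j))) a b).
      destruct (Nat.eq_dec j j') as [<-|E].
      * rewrite !sumLO_lt_same_index. simpl. intuition lia.
      * rewrite !sumLO_lt_diff_index by congruence. simpl. lia.
Qed.

Definition cnf_cons (a : nat) (f : nat -> nat) : nat -> nat :=
  fun i => match i with 0 => a | S i' => f i' end.

Lemma cnf_lt_cons f g a b :
  cnf_lt f g \/ (f = g /\ a < b) -> cnf_lt (cnf_cons a f) (cnf_cons b g).
Proof.
  intros [[i [Hi Hi']]|[<- H]].
  - exists (S i); split; [exact Hi|]. intros [|j] Hj; [lia|apply Hi'; lia].
  - exists 0; split; [exact H|]. intros [|j] Hj; [lia|reflexivity].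
Qed.

Lemma cnf_LO_times_omega (P Q : (nat -> nat) -> Prop)
  (cons_PQ : forall a f, P f -> Q (cnf_cons a f))
  (tail_QP : forall f, Q f -> P (fun i => f (S i))) :
  trichotomous (cnf_LO P) -> iso (prodLO (cnf_LO P) omega) (cnf_LO Q).
Proof.
  intros trP.
  apply (iso_of_strict_mono (prodLO (cnf_LO P) omega) (cnf_LO Q)
    (fun p => exist Q (cnf_cons (snd p) (proj1_sig (fst p))) (cons_PQ _ _ (proj2_sig (fst p))))
    (fun h => (exist P (fun i => proj1_sig h (S i)) (tail_QP _ (proj2_sig h)), proj1_sig h 0))).
  - intros [f a]; simpl. f_equal. now apply sig_eq.
  - intros h. apply sig_eq, functional_extensionality; now intros [|i].
  - intros [f a] [f' a'] [H|[E H]]; apply cnf_lt_cons; [now left|right].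
    split; [now rewrite E|exact H].
  - apply trichotomous_prodLO; [exact trP|apply trichotomous_omega].
  - apply asymmetric_cnf_LO.
Qed.

Lemma omega_pow_succ n : iso (prodLO (omega_pow n) omega) (omega_pow (S n)).
Proof.
  apply cnf_LO_times_omega; [| |apply trichotomous_omega_pow].
  - intros a f Hf [|i] Hi; [lia|apply Hf; lia].
  - intros f Hf i Hi; apply Hf; lia.
Qed.

Lemma omega_omega_times_omega : iso (prodLO omega_omega omega) omega_omega.
Proof.
  apply cnf_LO_times_omega; [| |apply trichotomous_omega_omega].
  - intros a f [N HN]; exists (S N); intros [|i] Hi; [lia|apply HN; lia].
  - intros f [N HN]; exists N; intros i Hi; apply HN; lia.
Qed.

Lemma omega_iso_omega_pow1 : iso omega (omega_pow 1).
Proof.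
  assert (single : forall a, supported_below 1 (cnf_cons a (fun _ => 0)))
    by (intros a [|i] Hi; [lia|reflexivity]).
  apply (iso_of_strict_mono omega (omega_pow 1)
    (fun a => exist _ (cnf_cons a (fun _ => 0)) (single a)) (fun f => proj1_sig f 0)).
  - reflexivity.
  - intros [f Hf]. apply sig_eq, functional_extensionality; intros [|i]; [reflexivity|].
    symmetry; apply Hf; lia.
  - intros a b H. apply cnf_lt_cons; now right.
  - apply trichotomous_omega.
  - apply asymmetric_cnf_LO.
Qed.

Lemma omega_pow2_iso : iso (omega_pow 2) (prodLO omega (omega_pow 1)).
Proof.
  eapply iso_trans; [apply iso_sym, omega_pow_succ|].
  apply prodLO_cong; [apply iso_sym|]; apply omega_iso_omega_pow1.
Qed.

Lemma prodLO_omega_pow2 X : iso (prodLO X (omega_pow 2)) (prodLO (prodLO X omega) omega).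
Proof.
  eapply iso_trans; [|apply iso_sym, prodLO_assoc].
  apply prodLO_cong; [apply iso_refl|].
  eapply iso_trans; [apply omega_pow2_iso|].
  apply prodLO_cong; [apply iso_refl|apply iso_sym, omega_iso_omega_pow1].
Qed.

Definition subLO (A : LO) (P : car A -> Prop) : LO :=
  mkLO {x | P x} (fun x y => lt A (proj1_sig x) (proj1_sig y)).

Lemma iso_initial_segment A (P : car A -> Prop) : trichotomous A ->
  (forall x y, lt A x y -> P y -> P x) ->
  iso A (sum2 (subLO A P) (subLO A (fun x => ~ P x))).
Proof.
  intros trA down.
  exists (fun x => match excluded_middle_informative (P x) with
                   | left p => inl (exist _ x p)
                   | right np => inr (exist _ x np) end).
  exists (fun q => match q with inl x => proj1_sig x | inr x => proj1_sig x end).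
  split; [|split].
  - intros x. now destruct (excluded_middle_informative (P x)).
  - intros [[x p]|[x np]]; simpl; destruct (excluded_middle_informative (P x));
      try contradiction; f_equal; now apply sig_eq.
  - intros x y.
    destruct (excluded_middle_informative (P x)) as [px|npx],
             (excluded_middle_informative (P y)) as [py|npy]; simpl; try tauto.
    + split; [trivial|intros _].
      destruct (trA x y) as [<-|[H|H]]; [contradiction|exact H|].
      exfalso; exact (npy (down _ _ H px)).
    + split; [intros H; exact (npx (down _ _ H py))|contradiction].
Qed.

Lemma cnf_lt_supported_below n f g :
  cnf_lt f g -> supported_below n g -> supported_below n f.
Proof.
  intros [i [Hi Hi']] Hg j Hj.
  destruct (lt_eq_lt_dec i j) as [[H|<-]|H].
  - rewrite Hi'; auto.
  - rewrite (Hg i Hj) in Hi; lia.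
  - rewrite (Hg i) in Hi; lia.
Qed.

Lemma omega_pow_segment n :
  iso (subLO omega_omega (fun f => supported_below n (proj1_sig f))) (omega_pow n).
Proof.
  exists (fun f : {g : car omega_omega | supported_below n (proj1_sig g)} =>
            exist (supported_below n) (proj1_sig (proj1_sig f)) (proj2_sig f)).
  exists (fun f : {g | supported_below n g} =>
            exist (fun g : car omega_omega => supported_below n (proj1_sig g))
              (exist _ (proj1_sig f) (ex_intro _ n (proj2_sig f))) (proj2_sig f)).
  split; [|split]; [intros f; now do 2 apply sig_eq|intros f; now apply sig_eq|reflexivity].
Qed.

Lemma omega_omega_split n : iso omega_omega
  (sum2 (omega_pow n) (subLO omega_omega (fun f => ~ supported_below n (proj1_sig f)))).
Proof.
  eapply iso_trans.
  - apply (iso_initial_segment omega_omega (fun f => supported_below n (proj1_sig f))).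
    + apply trichotomous_omega_omega.
    + intros f g; apply cnf_lt_supported_below.
  - apply sum2_cong; [apply omega_pow_segment|apply iso_refl].
Qed.

Lemma finLO_plus_omega c : iso (sum2 (finLO c) omega) omega.
Proof.
  apply (iso_of_strict_mono (sum2 (finLO c) omega) omega
    (fun p => match p with inl k => proj1_sig k | inr n => c + n end)
    (fun n => match lt_dec n c with left H => inl (exist _ n H) | right _ => inr (n - c) end)).
  - intros [[k Hk]|n]; simpl; destruct (lt_dec _ c); try lia.
    + f_equal; now apply sig_eq.
    + f_equal; lia.
  - intros n. destruct (lt_dec n c); simpl; lia.
  - intros [[k Hk]|n] [[k' Hk']|n']; simpl; lia.
  - apply trichotomous_sum2; [apply trichotomous_finLO|apply trichotomous_omega].
  - apply asymmetric_omega.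
Qed.

Lemma finLO_plus_omega_times X c :
  iso (sum2 (prodLO (finLO c) X) (prodLO omega X)) (prodLO omega X).
Proof.
  eapply iso_trans; [apply iso_sym, prodLO_sum2_distr|].
  apply prodLO_cong; [apply finLO_plus_omega|apply iso_refl].
Qed.

Lemma copies_plus_omega_omega c : iso (sum2 (copies c (omega_pow 1)) omega_omega) omega_omega.
Proof.
  eapply iso_trans; [apply sum2_cong; [apply iso_refl|apply (omega_omega_split 2)]|].
  eapply iso_trans; [apply iso_sym, sum2_assoc|].
  eapply iso_trans; [|apply iso_sym, (omega_omega_split 2)].
  apply sum2_cong; [|apply iso_refl].
  eapply iso_trans; [apply sum2_cong; [apply iso_refl|apply omega_pow2_iso]|].
  eapply iso_trans; [apply finLO_plus_omega_times|apply iso_sym, omega_pow2_iso].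
Qed.

Lemma copies_times_omega k n :
  iso (prodLO (copies k (omega_pow n)) omega) (copies k (omega_pow (S n))).
Proof.
  eapply iso_trans; [apply prodLO_assoc|].
  apply prodLO_cong; [apply iso_refl|apply omega_pow_succ].
Qed.

Lemma Lsummand_nonneg i k : (0 <= i)%Z -> Lsummand i k = copies k (omega_pow (Z.to_nat i + k)).
Proof. intros H. unfold Lsummand. now rewrite (proj2 (Z.leb_le 0 i) H). Qed.

Lemma Lsummand_neg i k : (i < 0)%Z -> Lsummand i k = copies (Z.to_nat (- i) + k) (omega_pow k).
Proof. intros H. unfold Lsummand. now rewrite (proj2 (Z.leb_gt 0 i) H). Qed.

Lemma Lsummand_succ_nonneg i k : (0 <= i)%Z ->
  Lsummand (i + 1) k = copies k (omega_pow (S (Z.to_nat i + k))).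
Proof.
  intros H. rewrite Lsummand_nonneg by lia.
  now replace (Z.to_nat (i + 1)) with (S (Z.to_nat i)) by lia.
Qed.

Lemma Lsummand_succ_neg i k : (i < 0)%Z ->
  Lsummand (i + 1) (S k) = copies (Z.to_nat (- i) + k) (omega_pow (S k)).
Proof.
  intros H. unfold Lsummand. destruct (Z.leb_spec 0 (i + 1)).
  - now replace (Z.to_nat (i + 1)) with 0 by lia; replace (Z.to_nat (- i)) with 1 by lia.
  - now replace (Z.to_nat (- i)) with (S (Z.to_nat (- (i + 1)))) by lia; rewrite Nat.add_succ_comm.
Qed.

Lemma L_times_omega_summands i : iso (prodLO (L i) omega)
  (sum2 (sumLO omega_star (fun j => prodLO (Lsummand i (S j)) omega)) omega_omega).
Proof.
  eapply iso_trans; [apply prodLO_sum2_distr|].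
  apply sum2_cong; [apply prodLO_sumLO_distr|apply omega_omega_times_omega].
Qed.

Lemma L_times_omega i : iso (prodLO (L i) omega) (L (i + 1)).
Proof.
  eapply iso_trans; [apply L_times_omega_summands|]. unfold L.
  destruct (Z_lt_le_dec i 0) as [Hneg|Hnonneg].
  - eapply iso_trans; [|apply iso_sym, sum2_cong; [apply sumLO_omega_star_last|apply iso_refl]].
    eapply iso_trans; [|apply iso_sym, sum2_assoc].
    apply sum2_cong.
    + apply sumLO_cong; intros j.
      rewrite Lsummand_neg, Lsummand_succ_neg by exact Hneg. apply copies_times_omega.
    + rewrite Lsummand_succ_neg, Nat.add_0_r by exact Hneg.
      apply iso_sym, copies_plus_omega_omega.
  - apply sum2_cong; [|apply iso_refl].
    apply sumLO_cong; intros j.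
    rewrite Lsummand_nonneg, Lsummand_succ_nonneg by exact Hnonneg. apply copies_times_omega.
Qed.

Lemma sumZ_L_times_omega (s : Z -> Z) :
  iso (prodLO (sumLO Zlo (fun m => L (s m))) omega) (sumLO Zlo (fun m => L (s m + 1)%Z)).
Proof.
  eapply iso_trans; [apply prodLO_sumLO_distr|].
  apply sumLO_cong; intros m; apply L_times_omega.
Qed.

Lemma sumZ_shift (N : Z -> LO) : iso (sumLO Zlo (fun m => N (m + 1)%Z)) (sumLO Zlo N).
Proof.
  apply (sumLO_reindex Zlo Zlo (fun m => (m + 1)%Z) (fun m => (m - 1)%Z)); simpl; lia.
Qed.

Lemma times_omega_pow2_of_swap X Y :
  iso (prodLO X omega) Y -> iso (prodLO Y omega) X -> iso (prodLO X (omega_pow 2)) X.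
Proof.
  intros XY YX. eapply iso_trans; [apply prodLO_omega_pow2|].
  eapply iso_trans; [apply prodLO_cong; [exact XY|apply iso_refl]|exact YX].
Qed.

Lemma I_even_times_omega : iso (prodLO I_even omega) I_odd.
Proof. exact (sumZ_L_times_omega (fun m => 2 * m)%Z). Qed.

Lemma I_odd_times_omega : iso (prodLO I_odd omega) I_even.
Proof.
  eapply iso_trans; [apply (sumZ_L_times_omega (fun m => 2 * m + 1)%Z)|].
  eapply iso_trans; [|apply (sumZ_shift (fun m => L (2 * m)))].
  apply iso_eq; f_equal; apply functional_extensionality; intros m; f_equal; lia.
Qed.

Lemma I_all_times_omega : iso (prodLO I_all omega) I_all.
Proof.
  eapply iso_trans; [apply (sumZ_L_times_omega (fun m => m))|].
  apply sumZ_shift.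
Qed.

Theorem mainTheorem6 :
  iso (prodLO I_even omega) I_odd /\
  iso (prodLO I_odd omega) I_even /\
  iso (prodLO I_all omega) I_all /\
  iso (prodLO I_even (omega_pow 2)) I_even /\
  iso (prodLO I_odd (omega_pow 2)) I_odd.
Proof.
  split; [exact I_even_times_omega|].
  split; [exact I_odd_times_omega|].
  split; [exact I_all_times_omega|].
  split.
  - exact (times_omega_pow2_of_swap _ _ I_even_times_omega I_odd_times_omega).
  - exact (times_omega_pow2_of_swap _ _ I_odd_times_omega I_even_times_omega).
Qed.
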